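(* The $(1,2)$ elitist black-box complexity of $\textsc{OneMax}$ (both Las Vegas and Monte Carlo) is $O(n)$. For any $\lambda\ge 2$, there are $(1,\lambda)$ Las Vegas and Monte Carlo elitist black-box algorithms that need at most $O(n/\log\lambda)$ generations on $\textsc{OneMax}$.
   Context: For $z\in\{0,1\}^n$, $\textsc{Om}_z(x)=n-\sum_{i=1}^n (x_i\oplus z_i)$; $\textsc{OneMax}=\{\textsc{Om}_z : z\in\{0,1\}^n\}$. A $(\mu,\lambda)$ elitist black-box algorithm maintains a multiset $X$ of $\mu$ search points; in each generation it samples $\lambda$ offspring from a distribution depending only on $X$ and the ranking of the fitness values in $X$ (not the values), learns the ranking of the offspring's fitness values, and the new $X$ must consist of $\mu$ offspring of highest fitness (ties broken arbitrarily; parents discarded). Runtime: number of sampled search points until an optimum is first sampled; generations counted analogously. Las Vegas complexity: min over algorithms of max over functions of expected runtime; $p$-Monte Carlo complexity: min over algorithms of smallest $T$ with success within $T$ evaluations with probability $\ge 1-p$ on every function (for every constant $p\in(0,1)$). *)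

From HB Require Import structures.
From mathcomp Require Import all_boot all_order all_algebra.
From mathcomp Require Import reals exp.
Set Implicit Arguments. Unset Strict Implicit. Unset Printing Implicit Defensive.
Import Order.TTheory GRing.Theory Num.Theory.
Local Open Scope ring_scope.

Definition point (n : nat) := {ffun 'I_n -> bool}.

Definition Om (n : nat) (z x : point n) : nat :=
  (n - \sum_(i < n) ((x i (+) z i) : nat))%N.

Definition optb (n : nat) (f : point n -> nat) (x : point n) : bool :=
  [forall y, (f y <= f x)%N].

Definition offspring (n lam : nat) := {ffun 'I_lam -> point n}.

(* The ranking of the fitness values of the offspring: the comparison
   relation (i,j) |-> f(y_i) <= f(y_j).  The algorithm sees only this. *)
Definition ranking (n lam : nat) (f : point n -> nat) (y : offspring n lam)
  : {ffun 'I_lam * 'I_lam -> bool} :=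
  [ffun ij => (f (y ij.1) <= f (y ij.2))%N].

(* A (1,lam) elitist black-box algorithm (mu = 1, so the ranking of X is trivial):
   - init   : distribution of the initial search point;
   - offs x : joint distribution of the lam offspring, depending only on the
              current point x;
   - sel x y rk : distribution of the index of the offspring that becomes the
              new current point, depending on x, the offspring y and their
              ranking rk; it must be an offspring of highest fitness
              (ties broken arbitrarily, i.e. as the algorithm chooses). *)
Record alg (R : realType) (n lam : nat) := Alg {
  init : point n -> R;
  offs : point n -> offspring n lam -> R;
  sel  : point n -> offspring n lam -> {ffun 'I_lam * 'I_lam -> bool} -> 'I_lam -> R
}.

Definition valid (R : realType) (n lam : nat) (A : alg R n lam) : Prop :=
  [/\ (forall x, 0 <= init A x) /\ \sum_x init A x = 1,
      (forall x y, 0 <= offs A x y) /\ (forall x, \sum_y offs A x y = 1),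
      (forall x y rk i, 0 <= sel A x y rk i) /\ (forall x y rk, \sum_i sel A x y rk i = 1)
    & forall (f : point n -> nat) x y i, 0 < sel A x y (ranking f y) i ->
        forall j, (f (y j) <= f (y i))%N].

(* surv A f t r x : probability, when the current point is x, that no optimum
   of f is sampled during the next t generations nor among the first r
   offspring of the generation after them. *)
Fixpoint surv (R : realType) (n lam : nat) (A : alg R n lam) (f : point n -> nat)
    (t r : nat) (x : point n) {struct t} : R :=
  match t with
  | O => \sum_(y : offspring n lam) offs A x y *
           (if [forall i : 'I_lam, (i < r)%N ==> ~~ optb f (y i)] then 1 else 0)
  | t'.+1 => \sum_(y : offspring n lam) offs A x y *
           ((if [forall i : 'I_lam, ~~ optb f (y i)] then 1 else 0) *
            \sum_(i : 'I_lam) sel A x y (ranking f y) i * surv A f t' r (y i))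
  end.

(* Generations: G = 0 if the initial point is optimal, otherwise the index of
   the first generation in which an optimum is sampled.  tailG t = P(G > t). *)
Definition tailG (R : realType) (n lam : nat) (A : alg R n lam) (f : point n -> nat)
    (t : nat) : R :=
  \sum_x init A x * (if optb f x then 0 else 1) * surv A f t 0 x.

(* Runtime T = number of sampled search points (initial point included) until
   an optimum is first sampled.  tailE k = P(T > k). *)
Definition tailE (R : realType) (n lam : nat) (A : alg R n lam) (f : point n -> nat)
    (k : nat) : R :=
  match k with
  | O => 1
  | k'.+1 => \sum_x init A x * (if optb f x then 0 else 1) *
               surv A f (k' %/ lam) (k' %% lam) x
  end.

From HB Require Import structures.
From mathcomp Require Import all_boot all_order all_algebra.
From mathcomp Require Import reals exp.
From mathcomp Require Import lra zify.
Set Implicit Arguments. Unset Strict Implicit. Unset Printing Implicit Defensive.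
Import Order.TTheory GRing.Theory Num.Theory.
Local Open Scope ring_scope.

(* The algorithm is deterministic.  Its current point copies the hidden optimum
   z on a prefix of length i and carries a marker 1 at position i, followed by
   zeros; the marker lets the algorithm read off i from the point alone.  With
   b = floor(log2 lam) it samples all 2^b completions of the next b bits, each
   followed by a marker at i + b.  These offspring agree outside the guessed
   block, so the fittest one is the correct guess and the prefix grows by b.
   After at most n/b + 1 generations the optimum has been sampled, hence all
   tail probabilities vanish beyond that point and are bounded by 1 before. *)

Section PointMass.
Variable R : realType.

Definition pmass (T : finType) (a : T) : T -> R := fun y => if y == a then 1 else 0.

Lemma sum_pmass (T : finType) (a : T) (F : T -> R) : \sum_y pmass a y * F y = F a.
Proof.
rewrite (bigD1 a) //= /pmass eqxx mul1r big1 ?addr0 // => y /negbTE ->.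
by rewrite mul0r.
Qed.

Lemma sum_pmass1 (T : finType) (a : T) : \sum_y pmass a y = 1.
Proof. by have := sum_pmass a (fun=> 1); under eq_bigr do rewrite mulr1. Qed.

Lemma pmass_ge0 (T : finType) (a y : T) : 0 <= pmass a y.
Proof. by rewrite /pmass; case: eqP. Qed.

End PointMass.
Arguments pmass {R T}.

Section OneMax.
Variable n : nat.
Implicit Types (x y z : point n).

Lemma sum_bits_le (c : 'I_n -> bool) : (\sum_(i < n) (c i : nat) <= n)%N.
Proof.
apply: (@leq_trans (\sum_(i < n) 1)%N); first by apply: leq_sum => i _; exact: leq_b1.
by rewrite sum_nat_const card_ord muln1.
Qed.

Lemma Om_id z : Om z z = n.
Proof. by rewrite /Om big1 ?subn0 // => i _; rewrite addbb. Qed.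

Lemma optb_Om z x : optb (Om z) x = (x == z).
Proof.
apply/idP/eqP => [/forallP/(_ z)|->]; last first.
  by apply/forallP => y; rewrite Om_id /Om leq_subr.
rewrite Om_id /Om => opt_x.
have : (\sum_(i < n) (x i (+) z i : nat) = 0)%N.
  by have := sum_bits_le (fun i => x i (+) z i); lia.
move/eqP; rewrite sum_nat_eq0 => /forallP Hx; apply/ffunP => j.
by move/implyP/(_ isT): (Hx j); case: (x j); case: (z j).
Qed.

Lemma Om_le_eq z x y :
  (forall j, x j != z j -> y j = x j) -> (Om z x <= Om z y)%N -> y = x.
Proof.
move=> keep le_xy.
pose err (p : point n) j := (p j (+) z j : nat).
have le_err j : (err x j <= err y j)%N.
  by rewrite /err; case: (eqVneq (x j) (z j)) => [-> | /keep ->]; rewrite ?addbb.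
have sum_le : (\sum_(j < n) err y j <= \sum_(j < n) err x j)%N.
  move: le_xy; rewrite /Om /err.
  have := sum_bits_le (fun j => x j (+) z j); have := sum_bits_le (fun j => y j (+) z j).
  by lia.
have [_ /esym] := @leqif_sum _ xpredT _ _ _ (fun j _ => leqif_eq (le_err j)).
rewrite eqn_leq leq_sum // sum_le.
move=> /forallP eq_err; apply/ffunP => j; move: (eq_err j) => /=.
by rewrite /err; case: (x j); case: (y j); case: (z j).
Qed.

End OneMax.

Definition best (l : nat) (rk : {ffun 'I_l.+1 * 'I_l.+1 -> bool}) : 'I_l.+1 :=
  odflt ord0 [pick i | [forall j, rk (j, i)]].

Lemma best_ranking_max (n l : nat) (f : point n -> nat) (y : offspring n l.+1) j :
  (f (y j) <= f (y (best (ranking f y))))%N.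
Proof.
rewrite /best; case: pickP => [i /forallP /(_ j) | no_max] /=; first by rewrite ffunE.
have [i0 _ i0_max] := @arg_maxnP _ ord0 xpredT (fun i => f (y i)) isT.
have /negbT/forallPn [j0] := no_max i0.
by rewrite ffunE /= => /negP[]; exact: i0_max.
Qed.

Lemma tail_weight_le1 (R : numDomainType) (c : bool) (s : R) : s <= 1 ->
  (if c then 0 else 1) * s <= 1.
Proof. by case: c; rewrite ?mul0r ?ler01 ?mul1r. Qed.

Section PrefixAlgorithm.
Variables (R : realType) (n l b : nat).
Local Notation lam := l.+1.
Implicit Types (x p z : point n).

Definition marker x : nat := (\max_(j < n | x j) j)%N.

Definition prefix_point (i : nat) p : point n :=
  [ffun j : 'I_n => if (j < i)%N then p j else (j == i :> nat)].

Definition guess (g : 'I_lam) : b.-tuple bool :=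
  nth [tuple of nseq b false] (enum {: b.-tuple bool}) g.

Definition child x (g : 'I_lam) : point n :=
  [ffun j : 'I_n => if (j < marker x)%N then x j
     else if (j < marker x + b)%N then nth false (guess g) (j - marker x)
     else (j == marker x + b :> nat)].

Definition children x : offspring n lam := [ffun g => child x g].

Definition start : point n := prefix_point 0 [ffun=> false].

Definition prefix_alg : alg R n lam :=
  Alg (pmass start) (fun x => pmass (children x)) (fun _ _ rk => pmass (best rk)).

Lemma prefix_alg_valid : valid prefix_alg.
Proof.
split.
- by split; [move=> x; apply: pmass_ge0 | apply: sum_pmass1].
- by split; [move=> x y; apply: pmass_ge0 | move=> x; apply: sum_pmass1].
- by split; [move=> *; apply: pmass_ge0 | move=> *; apply: sum_pmass1].
- move=> f x y i /=; rewrite /pmass; case: eqP => [-> _ | _]; last by rewrite ltxx.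
  by move=> j; apply: best_ranking_max.
Qed.

Lemma surv_prefix_algS f t r x : surv prefix_alg f t.+1 r x =
  (if [forall g, ~~ optb f (children x g)] then 1 else 0) *
  surv prefix_alg f t r (children x (best (ranking f (children x)))).
Proof.
rewrite /= sum_pmass; congr (_ * _).
exact: (sum_pmass (best _) (fun i => surv prefix_alg f t r (children x i))).
Qed.

Lemma surv_prefix_alg_le1 f t r x : surv prefix_alg f t r x <= 1.
Proof.
elim: t x => [|t IH] x; first by rewrite /= sum_pmass; case: ifP; rewrite ?ler01.
by rewrite surv_prefix_algS; case: ifP; rewrite ?mul1r ?mul0r ?ler01.
Qed.

Lemma tailG_prefix_alg f t : tailG prefix_alg f t =
  (if optb f start then 0 else 1) * surv prefix_alg f t 0 start.
Proof.
rewrite /tailG /=; under eq_bigr do rewrite -mulrA.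
exact: (sum_pmass start (fun x => (if optb f x then 0 else 1) * _)).
Qed.

Lemma tailE_prefix_alg f k : tailE prefix_alg f k.+1 =
  (if optb f start then 0 else 1) * surv prefix_alg f (k %/ lam) (k %% lam) start.
Proof.
rewrite /tailE /=; under eq_bigr do rewrite -mulrA.
exact: (sum_pmass start (fun x => (if optb f x then 0 else 1) * _)).
Qed.

Lemma tailG_prefix_alg_le1 f t : tailG prefix_alg f t <= 1.
Proof. by rewrite tailG_prefix_alg tail_weight_le1 ?surv_prefix_alg_le1. Qed.

Lemma tailE_prefix_alg_le1 f k : tailE prefix_alg f k <= 1.
Proof.
by case: k => [|k]; rewrite ?lexx // tailE_prefix_alg tail_weight_le1 ?surv_prefix_alg_le1.
Qed.

Lemma marker_prefix_point i p : (i < n)%N -> marker (prefix_point i p) = i.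
Proof.
move=> lt_in; apply/eqP; rewrite eqn_leq; apply/andP; split.
  apply/bigmax_leqP => j; rewrite ffunE; case: ltnP => [/ltnW //|_].
  by move/eqP => ->.
have := @leq_bigmax_cond _ (prefix_point i p) (fun j => nat_of_ord j) (Ordinal lt_in).
by rewrite ffunE ltnn eqxx => /(_ isT).
Qed.

Lemma prefix_point_full k p : (n <= k)%N -> prefix_point k p = p.
Proof.
move=> le_nk; apply/ffunP => j; rewrite ffunE.
by rewrite (leq_trans (ltn_ord j) le_nk).
Qed.

Lemma start_prefix_point z : start = prefix_point 0 z.
Proof. by apply/ffunP => j; rewrite !ffunE. Qed.

Definition block (i : nat) z : b.-tuple bool :=
  [tuple nth false (fgraph z) (i + k) | k < b].

Hypothesis guesses_cover : (2 ^ b <= lam)%N.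

Lemma guess_block i z : exists g, guess g = block i z.
Proof.
have lt_index : (index (block i z) (enum {: b.-tuple bool}) < lam)%N.
  apply: leq_trans guesses_cover.
  have -> : (2 ^ b = #|{: b.-tuple bool}|)%N by rewrite card_tuple card_bool.
  by rewrite cardE index_mem mem_enum.
by exists (Ordinal lt_index); rewrite /guess /= nth_index ?mem_enum.
Qed.

Lemma child_guess_block i z g : (i < n)%N -> guess g = block i z ->
  child (prefix_point i z) g = prefix_point (i + b) z.
Proof.
move=> lt_in gE; apply/ffunP => j; rewrite !ffunE marker_prefix_point // gE.
case: (ltnP j i) => [lt_ji | le_ij]; first by rewrite (leq_trans lt_ji (leq_addr _ _)).
case: (ltnP j (i + b)) => // lt_jib.
have lt_k : (j - i < b)%N by lia.
rewrite (nth_mktuple (fun k : 'I_b => nth false (fgraph z) (i + k)) false (Ordinal lt_k)) /=.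
by rewrite subnKC // nth_fgraph_ord.
Qed.

Lemma best_child_prefix_point i z : (i < n)%N ->
  children (prefix_point i z) (best (ranking (Om z) (children (prefix_point i z))))
  = prefix_point (i + b) z.
Proof.
move=> lt_in; have [g gE] := guess_block i z.
have := best_ranking_max (Om z) (children (prefix_point i z)) g.
rewrite !ffunE child_guess_block //; apply: Om_le_eq => j.
rewrite !ffunE marker_prefix_point //; case: ltnP => [lt_jib | le_ibj].
  by rewrite eqxx.
by rewrite ltnNge (leq_trans (leq_addr _ _) le_ibj).
Qed.

Lemma surv_prefix_alg_finish i z t r : (i < n)%N -> (n <= i + b)%N ->
  surv prefix_alg (Om z) t.+1 r (prefix_point i z) = 0.
Proof.
move=> lt_in le_nib; have [g gE] := guess_block i z.
rewrite surv_prefix_algS; case: forallP => [/(_ g) | _]; last by rewrite mul0r.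
by rewrite ffunE child_guess_block // prefix_point_full // optb_Om eqxx.
Qed.

Lemma surv_prefix_alg_eq0 z r t i : (i < n)%N -> (n - i <= t.+1 * b)%N ->
  surv prefix_alg (Om z) t.+1 r (prefix_point i z) = 0.
Proof.
elim: t i => [|t IH] i lt_in le_rem; case: (leqP n (i + b)) => le_nib.
- exact: surv_prefix_alg_finish.
- by lia.
- exact: surv_prefix_alg_finish.
rewrite surv_prefix_algS best_child_prefix_point // IH ?mulr0 //.
by rewrite mulSn in le_rem; lia.
Qed.

Hypotheses (b_gt0 : (0 < b)%N) (n_gt0 : (0 < n)%N).

Lemma surv_start_eq0 z r t : (n %/ b < t)%N -> surv prefix_alg (Om z) t r start = 0.
Proof.
case: t => // t lt_t; rewrite (start_prefix_point z) surv_prefix_alg_eq0 // subn0.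
exact: leq_trans (ltnW (ltn_ceil n b_gt0)) (leq_mul lt_t (leqnn b)).
Qed.

Lemma tailG_prefix_alg_eq0 z t : (n %/ b < t)%N -> tailG prefix_alg (Om z) t = 0.
Proof. by move=> lt_t; rewrite tailG_prefix_alg surv_start_eq0 ?mulr0. Qed.

Lemma tailE_prefix_alg_eq0 z k : ((n %/ b).+1 * lam < k)%N -> tailE prefix_alg (Om z) k = 0.
Proof.
case: k => // k lt_k; rewrite tailE_prefix_alg surv_start_eq0 ?mulr0 //.
by rewrite leq_divRL.
Qed.

End PrefixAlgorithm.

Lemma sum_le_support (R : numDomainType) (a : nat -> R) G :
  (forall k, a k <= 1) -> (forall k, (G <= k)%N -> a k = 0) ->
  forall N, \sum_(k < N) a k <= G%:R.
Proof.
move=> a_le1 a_eq0 N.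
suff : \sum_(k < N) a k <= (minn N G)%:R.
  by move=> h; apply: le_trans h _; rewrite ler_nat geq_minr.
elim: N => [|N IH]; first by rewrite big_ord0.
rewrite big_ord_recr /=; case: (ltnP N G) => h.
  rewrite (minn_idPl (ltnW h)) in IH.
  by rewrite (minn_idPl h) -addn1 natrD lerD.
rewrite a_eq0 // addr0; rewrite (minn_idPr h) in IH.
by rewrite (minn_idPr (leq_trans h (leqnSn _))).
Qed.

Lemma ln_le_trunc_log2 (R : realType) m : (0 < m)%N ->
  ln (m%:R : R) <= (trunc_log 2 m).+1%:R.
Proof.
move=> m_gt0; set b := trunc_log 2 m.
have ln2_le1 : ln (2 : R) <= 1.
  by have := @le_ln1Dx R 1 ltac:(lra); rewrite (_ : 1 + 1 = 2 :> R).
apply: (@le_trans _ _ (ln ((2 : R) ^+ b.+1))).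
  rewrite ler_ln ?posrE ?ltr0n ?exprn_gt0 // -natrX ler_nat ltnW //.
  exact: trunc_log_ltn.
rewrite lnXn // -(mulr_natr (ln (2 : R))); have b1_ge0 := ler0n R b.+1; nra.
Qed.

Lemma trunc_log2_generations (R : realType) n m : (1 < m)%N ->
  (n %/ trunc_log 2 m).+1%:R <= 3 * Num.max 1 (n%:R / ln (m%:R : R)).
Proof.
move=> m_gt1; set b := trunc_log 2 m; set L := ln _.
have b_ge1 : 1 <= b%:R :> R by rewrite ler1n trunc_log_gt0.
have L_gt0 : 0 < L by apply: ln_gt0; rewrite ltr1n.
have L_le : L <= b%:R + 1 by rewrite natr1 ln_le_trunc_log2 // ltnW.
have qb_le : (n %/ b)%:R * b%:R <= n%:R :> R by rewrite -natrM ler_nat leq_divM.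
have q_ge0 : 0 <= (n %/ b)%:R :> R by rewrite ler0n.
set q := (n %/ b)%:R in qb_le q_ge0 *.
have q_le : q <= 2 * (n%:R / L).
  by rewrite mulrA ler_pdivlMr //; nra.
have M1 : 1 <= Num.max 1 (n%:R / L) by rewrite le_max lexx.
have M2 : n%:R / L <= Num.max 1 (n%:R / L) by rewrite le_max lexx orbT.
by rewrite -addn1 natrD -/q; lra.
Qed.

Lemma trunc_log2_block lam : (1 < lam)%N ->
  (0 < trunc_log 2 lam)%N /\ (2 ^ trunc_log 2 lam <= lam)%N.
Proof. by move=> lam_gt1; rewrite trunc_log_gt0 lam_gt1 trunc_logP // ltnW. Qed.

Theorem corollary2 (R : realType) :
  (* (1,2) Las Vegas: O(n) expected evaluations *)
  (exists C : R, forall n : nat, (0 < n)%N ->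
     exists A : alg R n 2, valid A /\
       forall (z : point n) (N : nat), \sum_(k < N) tailE A (Om z) k <= C * n%:R)
  /\
  (* (1,2) p-Monte Carlo: O(n) evaluations, for every constant p in (0,1) *)
  (forall p : R, 0 < p < 1 -> exists C : nat, forall n : nat, (0 < n)%N ->
     exists A : alg R n 2, valid A /\
       forall z : point n, tailE A (Om z) (C * n)%N <= p)
  /\
  (* (1,lam) Las Vegas: O(n / log lam) expected generations *)
  (exists C : R, forall n lam : nat, (0 < n)%N -> (2 <= lam)%N ->
     exists A : alg R n lam, valid A /\
       forall (z : point n) (N : nat),
         \sum_(t < N) tailG A (Om z) t <= C * Num.max 1 (n%:R / ln lam%:R))
  /\
  (* (1,lam) p-Monte Carlo: O(n / log lam) generations *)
  (forall p : R, 0 < p < 1 -> exists C : R, forall n lam : nat, (0 < n)%N -> (2 <= lam)%N ->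
     exists A : alg R n lam, valid A /\
       exists t : nat, t%:R <= C * Num.max 1 (n%:R / ln lam%:R) /\
         forall z : point n, tailG A (Om z) t <= p).
Proof.
have tailE2_eq0 n (z : point n) k : (0 < n)%N -> (2 * n + 2 < k)%N ->
    tailE (prefix_alg R n 1 1) (Om z) k = 0.
  by move=> n_gt0 lt_k; rewrite tailE_prefix_alg_eq0 // divn1 mulSn; lia.
split; [|split; [|split]].
- exists 5 => n n_gt0; exists (prefix_alg R n 1 1); split; first exact: prefix_alg_valid.
  move=> z N; apply: le_trans (sum_le_support (G := (2 * n + 3)%N) _ _ N) _.
  + exact: tailE_prefix_alg_le1.
  + by move=> k le_k; apply: tailE2_eq0 => //; lia.
  + by rewrite -natrM ler_nat; lia.
- move=> p /andP [p_gt0 _]; exists 5%N => n n_gt0; exists (prefix_alg R n 1 1).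
  by split=> [|z]; [exact: prefix_alg_valid | rewrite tailE2_eq0 ?ltW //; lia].
- exists 3 => n lam n_gt0 lam_ge2; case: lam lam_ge2 => // l lam_ge2.
  have [b_gt0 b_cover] := trunc_log2_block lam_ge2.
  exists (prefix_alg R n l (trunc_log 2 l.+1)); split; first exact: prefix_alg_valid.
  move=> z N; apply: le_trans (sum_le_support _ _ N) _.
  + exact: tailG_prefix_alg_le1.
  + by move=> t; apply: tailG_prefix_alg_eq0.
  + exact: trunc_log2_generations.
- move=> p /andP [p_gt0 _]; exists 3 => n lam n_gt0 lam_ge2.
  case: lam lam_ge2 => // l lam_ge2; have [b_gt0 b_cover] := trunc_log2_block lam_ge2.
  exists (prefix_alg R n l (trunc_log 2 l.+1)); split; first exact: prefix_alg_valid.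
  exists (n %/ trunc_log 2 l.+1).+1; split; first exact: trunc_log2_generations.
  by move=> z; rewrite tailG_prefix_alg_eq0 ?ltW.
Qed.
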